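(* Let $a, b$ be positive integers and let $T_{a,b} = \{C_{i,1} : 1 \le i \le 2a+1\} \cup \{C_{a+1,j} : 2 \le j \le b+1\}$, of size $n = 2a+b+1$. Then on the $n \times n$ board, $2 \le \mathrm{cp}_{\mathrm{free}}(T_{a,b}) \le 4$.
   Context: For integers $i,j$, $C_{i,j}$ denotes the unit square cell in column $i$ and row $j$ of the integer grid (columns numbered left to right, rows numbered top to bottom). A polyomino is a finite set of cells; its size is its number of cells. For a polyomino $\mathcal{P}$ of size $n$ the board is $\mathbb{B} = \{C_{i,j} : 1 \le i,j \le n\}$. The shift of $\mathcal{P}$ by integers $(c,d)$ is $\mathcal{P}+(c,d) = \{C_{x+c,y+d} : C_{x,y} \in \mathcal{P}\}$. The rotations of $T_{a,b}$ by $90^\circ,180^\circ,270^\circ$ clockwise are $TR_{a,b} = \{C_{b+1,i} : 1 \le i \le 2a+1\} \cup \{C_{j,a+1} : 1 \le j \le b\}$, $TR^2_{a,b} = \{C_{i,b+1} : 1 \le i \le 2a+1\} \cup \{C_{a+1,j} : 1 \le j \le b\}$, $TR^3_{a,b} = \{C_{1,i} : 1 \le i \le 2a+1\} \cup \{C_{j,a+1} : 2 \le j \le b+1\}$. A free copy of $T_{a,b}$ is any shift of one of these four. A set of polyominoes is a valid arrangement if each is contained in $\mathbb{B}$ and they are pairwise disjoint. A free packing of $\mathcal{P}$ is a set of free copies of $\mathcal{P}$ forming a valid arrangement such that adding any further free copy of $\mathcal{P}$ yields an invalid arrangement. The clumsy free packing number $\mathrm{cp}_{\mathrm{free}}(\mathcal{P})$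 is the minimum number of polyominoes in a free packing of $\mathcal{P}$ on the $n \times n$ board. *)

From HB Require Import structures.
From mathcomp Require Import all_boot all_order all_algebra.
From mathcomp Require Import finmap.
Set Implicit Arguments. Unset Strict Implicit. Unset Printing Implicit Defensive.
Import Order.TTheory GRing.Theory Num.Theory.
Local Open Scope fset_scope.
Local Open Scope ring_scope.

(* A cell C_{i,j} (column i, row j) is the pair (i, j) of integers. *)
Definition cell := (int * int)%type.
Definition polyomino := {fset cell}.

Definition mkcells (s : seq cell) : polyomino := [fset x | x in s].

Definition T_ab (a b : nat) : polyomino :=
  mkcells ([seq ((i%:Z), 1%:Z) | i <- iota 1 (2*a+1)] ++
           [seq (((a+1)%N)%:Z, (j%:Z)) | j <- iota 2 b]).
Definition TR_ab (a b : nat) : polyomino :=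
  mkcells ([seq (((b+1)%N)%:Z, (i%:Z)) | i <- iota 1 (2*a+1)] ++
           [seq ((j%:Z), ((a+1)%N)%:Z) | j <- iota 1 b]).
Definition TR2_ab (a b : nat) : polyomino :=
  mkcells ([seq ((i%:Z), ((b+1)%N)%:Z) | i <- iota 1 (2*a+1)] ++
           [seq (((a+1)%N)%:Z, (j%:Z)) | j <- iota 1 b]).
Definition TR3_ab (a b : nat) : polyomino :=
  mkcells ([seq (1%:Z, (i%:Z)) | i <- iota 1 (2*a+1)] ++
           [seq ((j%:Z), ((a+1)%N)%:Z) | j <- iota 2 b]).

Definition shift (P : polyomino) (c d : int) : polyomino :=
  [fset (x.1 + c, x.2 + d) | x in P].

Definition free_copy_T (a b : nat) (Q : polyomino) : Prop :=
  exists (R : polyomino) (c d : int),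
    R \in [:: T_ab a b; TR_ab a b; TR2_ab a b; TR3_ab a b] /\ Q = shift R c d.

Definition board (n : nat) : polyomino :=
  mkcells [seq ((i%:Z), (j%:Z)) | i <- iota 1 n, j <- iota 1 n].

Definition valid_arrangement (n : nat) (S : {fset polyomino}) : Prop :=
  (forall Q, Q \in S -> Q `<=` board n) /\
  (forall Q Q', Q \in S -> Q' \in S -> Q != Q' -> [disjoint Q & Q']).

Definition free_packing_T (a b : nat) (S : {fset polyomino}) : Prop :=
  let n := #|` T_ab a b| in
  (forall Q, Q \in S -> free_copy_T a b Q) /\
  valid_arrangement n S /\
  (forall Q, free_copy_T a b Q -> Q \notin S -> ~ valid_arrangement n (Q |` S)).

Definition is_cp_free_T (a b k : nat) : Prop :=
  (exists S, free_packing_T a b S /\ #|` S| = k) /\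
  (forall S, free_packing_T a b S -> (k <= #|` S|)%N).

From HB Require Import structures.
From mathcomp Require Import all_boot all_order all_algebra.
From mathcomp Require Import finmap zify.
From Stdlib Require Import Classical Wf_nat Zify.
Set Implicit Arguments. Unset Strict Implicit. Unset Printing Implicit Defensive.
Import Order.TTheory GRing.Theory Num.Theory.
Local Open Scope fset_scope.
Local Open Scope ring_scope.

(* A free copy of T_{a,b} is the union of two rectangles of width one, its bar
   and its stem, so whether two copies overlap is a linear condition on their
   offsets.  Lower bound: for every copy on the board, some copy pushed against a
   suitable side of the board misses it, so a free packing has at least two
   pieces.  Upper bound: depending on the length b of the stem relative to a, four
   explicit pairwise disjoint copies already meet every copy on the board, which
   is checked by a case analysis on the offsets in linear arithmetic. *)

Record box := Box { xlo : int; xhi : int; ylo : int; yhi : int }.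

Definition in_box (B : box) (p : cell) : bool :=
  (xlo B <= p.1 <= xhi B) && (ylo B <= p.2 <= yhi B).

Definition box_nonempty (B : box) : bool := (xlo B <= xhi B) && (ylo B <= yhi B).

Definition box_meet (B B' : box) : bool :=
  [&& xlo B <= xhi B', xlo B' <= xhi B, ylo B <= yhi B' & ylo B' <= yhi B].

Lemma box_meetW (B B' : box) p : in_box B p -> in_box B' p -> box_meet B B'.
Proof. by rewrite /in_box /box_meet; lia. Qed.

Lemma box_meetP (B B' : box) : box_nonempty B -> box_nonempty B' ->
  reflect (exists p, in_box B p && in_box B' p) (box_meet B B').
Proof.
move=> neB neB'; apply: (iffP idP) => [meet|[p /andP[]]]; last exact: box_meetW.
exists (Num.max (xlo B) (xlo B'), Num.max (ylo B) (ylo B')).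
by move: neB neB' meet; rewrite /box_nonempty /box_meet /in_box /=; lia.
Qed.

Lemma mem_mkcells (s : seq cell) p : (p \in mkcells s) = (p \in s).
Proof. by rewrite inE. Qed.

Lemma mem_iota_int (x : int) lo len :
  (x \in [seq i%:Z | i <- iota lo len]) = (lo%:Z <= x < (lo + len)%:Z).
Proof.
case: x => [m|m]; last by rewrite andFb; apply/negbTE/mapP => -[].
by rewrite (mem_map (can_inj absz_nat)) mem_iota; lia.
Qed.

Lemma mem_row_map (y : int) (s : seq nat) (p : cell) :
  (p \in [seq (i%:Z, y) | i <- s]) = (p.2 == y) && (p.1 \in [seq i%:Z | i <- s]).
Proof.
case: p => u v /=; elim: s => [|i s IH] /=; first by rewrite andbF.
by rewrite !inE IH xpair_eqE; case: (v == y); rewrite ?andbT ?andbF.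
Qed.

Lemma mem_col_map (x : int) (s : seq nat) (p : cell) :
  (p \in [seq (x, j%:Z) | j <- s]) = (p.1 == x) && (p.2 \in [seq j%:Z | j <- s]).
Proof.
case: p => u v /=; elim: s => [|j s IH] /=; first by rewrite andbF.
by rewrite !inE IH xpair_eqE; case: (u == x); rewrite ?andbT ?andbF.
Qed.

Lemma mem_shift (P : polyomino) (c d : int) (p : cell) :
  (p \in shift P c d) = ((p.1 - c, p.2 - d) \in P).
Proof.
apply/imfsetP/idP => [[q qP ->] /=|pP]; first by rewrite !addrK -surjective_pairing.
by exists (p.1 - c, p.2 - d); rewrite //= !subrK -surjective_pairing.
Qed.

Lemma mem_board n (p : cell) :
  (p \in board n) = (1 <= p.1 <= n%:Z) && (1 <= p.2 <= n%:Z).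
Proof.
rewrite mem_mkcells; case: p => x y /=.
apply/allpairsP/idP => [[[i j] /= [hi hj [-> ->]]]|h].
  by move: hi hj; rewrite !mem_iota; lia.
case: x h => [i|i] h; last lia.
case: y h => [j|j] h; last lia.
by exists (i, j); rewrite /= !mem_iota; split => //; lia.
Qed.

Lemma valid_arrangement_fsetU1 n (S : {fset polyomino}) (Q : polyomino) :
  valid_arrangement n S -> Q `<=` board n ->
  (forall Q', Q' \in S -> [disjoint Q & Q']) -> valid_arrangement n (Q |` S).
Proof.
move=> [sub dis] subQ disQ; split => [P|P P'].
  by move=> /fset1UP[->|/sub].
move=> /fset1UP[->|hP] /fset1UP[->|hP'] ne; rewrite ?eqxx // in ne.
- exact: disQ.
- by rewrite fdisjoint_sym; apply: disQ.
- exact: dis.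
Qed.

Inductive rotation := Rot0 | Rot1 | Rot2 | Rot3.
Scheme Equality for rotation.
HB.instance Definition _ := comparableMixin rotation_eq_dec.

Definition rotated (r : rotation) (a b : nat) : polyomino :=
  match r with
  | Rot0 => T_ab a b | Rot1 => TR_ab a b | Rot2 => TR2_ab a b | Rot3 => TR3_ab a b
  end.

Definition placement := (rotation * int * int)%type.

Section Placements.

Variables a b : nat.
Hypothesis a_gt0 : (0 < a)%N.
Hypothesis b_gt0 : (0 < b)%N.

Local Notation A := (Posz a).
Local Notation B := (Posz b).

Definition bar (q : placement) : box :=
  let: (r, c, d) := q in
  match r with
  | Rot0 => Box (c + 1) (c + 2 * A + 1) (d + 1) (d + 1)
  | Rot1 => Box (c + B + 1) (c + B + 1) (d + 1) (d + 2 * A + 1)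
  | Rot2 => Box (c + 1) (c + 2 * A + 1) (d + B + 1) (d + B + 1)
  | Rot3 => Box (c + 1) (c + 1) (d + 1) (d + 2 * A + 1)
  end.

Definition stem (q : placement) : box :=
  let: (r, c, d) := q in
  match r with
  | Rot0 => Box (c + A + 1) (c + A + 1) (d + 2) (d + B + 1)
  | Rot1 => Box (c + 1) (c + B) (d + A + 1) (d + A + 1)
  | Rot2 => Box (c + A + 1) (c + A + 1) (d + 1) (d + B)
  | Rot3 => Box (c + 2) (c + B + 1) (d + A + 1) (d + A + 1)
  end.

Definition cells (q : placement) : polyomino :=
  let: (r, c, d) := q in shift (rotated r a b) c d.

Definition fits (q : placement) : bool :=
  let: (r, c, d) := q in
  match r with
  | Rot0 | Rot2 => (0 <= c <= B) && (0 <= d <= 2 * A)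
  | Rot1 | Rot3 => (0 <= c <= 2 * A) && (0 <= d <= B)
  end.

Definition meet (q q' : placement) : bool :=
  [|| box_meet (bar q) (bar q'), box_meet (bar q) (stem q'),
      box_meet (stem q) (bar q') | box_meet (stem q) (stem q')].

Lemma mem_cells q p : (p \in cells q) = in_box (bar q) p || in_box (stem q) p.
Proof.
case: q => [[r c d]]; rewrite /cells mem_shift.
case: r; rewrite /= mem_mkcells mem_cat mem_row_map mem_col_map !mem_iota_int;
  by rewrite /in_box /=; lia.
Qed.

Lemma card_T_ab : #|` T_ab a b| = (2 * a + b + 1)%N.
Proof.
rewrite card_fseq undup_id; first by rewrite size_cat !size_map !size_iota; lia.
rewrite cat_uniq !map_inj_uniq ?iota_uniq; try by move=> i j [].
rewrite andbT /=; apply/hasPn => p /mapP [j hj ->].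
by rewrite mem_row_map /=; move: hj; rewrite mem_iota; lia.
Qed.

Lemma cells_sub_board q : (cells q `<=` board #|` T_ab a b|) = fits q.
Proof.
rewrite card_T_ab; apply/fsubsetP/idP => [sub|fit p].
  have onboard p : in_box (bar q) p || in_box (stem q) p -> p \in board (2 * a + b + 1).
    by rewrite -mem_cells; apply: sub.
  have := onboard (xlo (bar q), ylo (bar q)); have := onboard (xhi (bar q), yhi (bar q)).
  have := onboard (xlo (stem q), ylo (stem q)); have := onboard (xhi (stem q), yhi (stem q)).
  by rewrite !mem_board; case: q {sub onboard} => [[[] c d]]; rewrite /in_box /=; lia.
by rewrite mem_cells mem_board; case: q fit => [[[] c d]]; rewrite /in_box /=; lia.
Qed.

Lemma bar_nonempty q : box_nonempty (bar q).
Proof. by case: q => [[[] c d]]; rewrite /box_nonempty /=; lia. Qed.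

Lemma stem_nonempty q : box_nonempty (stem q).
Proof. by case: q => [[[] c d]]; rewrite /box_nonempty /=; lia. Qed.

Lemma meetP q q' : reflect (exists p, (p \in cells q) && (p \in cells q')) (meet q q').
Proof.
apply: (iffP idP) => [|[p]]; last first.
  by rewrite !mem_cells => /andP[/orP[] h /orP[] h']; rewrite /meet (box_meetW h h') ?orbT.
have [nb nb'] := (bar_nonempty q, bar_nonempty q').
have [ns ns'] := (stem_nonempty q, stem_nonempty q').
case/or4P => [/(box_meetP nb nb')|/(box_meetP nb ns')|/(box_meetP ns nb')|/(box_meetP ns ns')];
  by case=> p /andP[h h']; exists p; rewrite !mem_cells h h' ?orbT.
Qed.

Lemma disjoint_cells q q' : [disjoint cells q & cells q'] = ~~ meet q q'.
Proof.
apply/fdisjointP/idP => [dis|nomeet p h].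
  by apply/meetP => -[p /andP[h h']]; move: (dis p h); rewrite h'.
by apply/negP => h'; case/negP: nomeet; apply/meetP; exists p; rewrite h h'.
Qed.

Lemma meet_refl q : meet q q.
Proof. by case: q => [[[] c d]]; rewrite /meet /box_meet /=; lia. Qed.

Lemma meet_cells_eq q q' : cells q = cells q' -> meet q q'.
Proof. by move=> E; rewrite -[meet q q']negbK -disjoint_cells E disjoint_cells meet_refl. Qed.

Lemma free_copyP Q : free_copy_T a b Q <-> exists q, Q = cells q.
Proof.
split => [[R [c [d [+ ->]]]]|[[[r c] d] ->]].
  rewrite !inE => /or4P[]/eqP->;
  [exists (Rot0, c, d) | exists (Rot1, c, d) | exists (Rot2, c, d) | exists (Rot3, c, d)] => //.
by exists (rotated r a b), c, d; split => //; case: r; rewrite !inE eqxx ?orbT.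
Qed.

Definition maximal_placements (s : seq placement) : Prop :=
  [/\ all fits s, {in s &, forall q q', q != q' -> ~~ meet q q'}
    & forall q, fits q -> has (meet q) s].

Lemma free_packing_of_maximal s :
  maximal_placements s -> free_packing_T a b [fset Q in map cells s].
Proof.
case=> /allP fit dis block.
have memS Q : Q \in [fset Q in map cells s] -> exists2 q, q \in s & Q = cells q.
  by rewrite inE => /mapP.
have valid : valid_arrangement #|` T_ab a b| [fset Q in map cells s].
  split => [Q /memS[q qs ->]|Q Q' /memS[q qs ->] /memS[q' q's ->] ne].
    by rewrite cells_sub_board fit.
  by rewrite disjoint_cells dis //; apply: contraNneq ne => ->.
split => [Q /memS[q _ ->]|]; first by apply/free_copyP; exists q.
split=> // Q /free_copyP[q ->] notin [sub dis'].
have fitq : fits q by rewrite -cells_sub_board sub ?fset1U1.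
have /hasP[q' q's meetq] := block q fitq.
have inS : cells q' \in [fset Q in map cells s] by rewrite inE map_f.
have ne : cells q != cells q' by apply: contraNneq notin => ->.
by move: (dis' _ _ (fset1U1 _ _) (fset1Ur _ inS) ne); rewrite disjoint_cells meetq.
Qed.

Tactic Notation "miss_by" constr(r) uconstr(c) uconstr(d) :=
  exists ((r, c, d) : placement); rewrite /fits /meet /box_meet /=; lia.

Lemma exists_placement_missing q0 : fits q0 -> exists2 q, fits q & ~~ meet q q0.
Proof.
case: q0 => [[[] c d]] /= fit.
- case: (d =P 2 * A) => [->|hd]; case: (c =P 0) => [->|hc];
    [miss_by Rot1 (2 * A) 0 | miss_by Rot3 0 0
    | miss_by Rot2 1 (2 * A) | miss_by Rot2 0 (2 * A)].
- case: (c =P 0) => [->|hc]; case: (d =P 0) => [->|hd];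
    [miss_by Rot2 B (2 * A) | miss_by Rot0 B 0
    | miss_by Rot3 0 1 | miss_by Rot3 0 0].
- case: (d =P 0) => [->|hd]; case: (c =P 0) => [->|hc];
    [miss_by Rot1 (2 * A) B | miss_by Rot3 0 B
    | miss_by Rot0 1 0 | miss_by Rot0 0 0].
- case: (c =P 2 * A) => [->|hc]; case: (d =P 0) => [->|hd];
    [miss_by Rot2 0 (2 * A) | miss_by Rot0 0 0
    | miss_by Rot1 (2 * A) 1 | miss_by Rot1 (2 * A) 0].
Qed.

Lemma free_packing_size_ge2 S : free_packing_T a b S -> (2 <= #|` S|)%N.
Proof.
case=> copies [valid maximal].
have extend q : fits q -> cells q \notin S ->
    (forall Q', Q' \in S -> [disjoint cells q & Q']) -> False.
  move=> fit notin disq; apply: (maximal (cells q) _ notin); first by apply/free_copyP; exists q.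
  by apply: valid_arrangement_fsetU1; rewrite ?cells_sub_board.
case E: #|` S| => [|[|//]]; exfalso.
  move/cardfs0_eq: E => S0; apply: (extend (Rot0, 0, 0)); rewrite ?S0 //=; lia.
have /cardfs1P[Q0 S1] : #|` S| == 1%N by rewrite E.
have /free_copyP[q0 Q0E] : free_copy_T a b Q0 by apply: copies; rewrite S1 fset11.
have fit0 : fits q0 by rewrite -cells_sub_board -Q0E; apply: valid.1; rewrite S1 fset11.
have [q fit miss] := exists_placement_missing fit0.
apply: (extend q fit); rewrite S1.
  by rewrite inE Q0E; apply: contraNneq miss => /meet_cells_eq.
by move=> Q'; rewrite inE => /eqP->; rewrite Q0E disjoint_cells.
Qed.

End Placements.

Ltac split_undecided atoms :=
  match atoms with
  | context [ BinInt.Z.leb ?x ?y ] =>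
      assert_fails (assert (BinInt.Z.le x y) by lia);
      have [?|?] : BinInt.Z.le x y \/ BinInt.Z.lt y x by lia
  end.

(* [cover] proves [u1 || ... || un = true], each [ui] a conjunction of linear
   constraints over [Z]: it discards the disjuncts refuted by the context, stops
   at one the context entails, and otherwise splits on an atom of the first
   remaining disjunct that the context leaves open.  As lia decides linear integer
   arithmetic, a disjunct that is neither refuted nor entailed has such an atom. *)
Ltac cover :=
  lazymatch goal with
  | |- (?u || _) = true =>
      tryif have /negbTE -> : ~~ u by lia then rewrite orFb; cover
      else tryif have -> : u by lia then done
      else split_undecided u; cover
  end.

Ltac maximal_by_cover :=
  split;
  [ rewrite /= /fits; lia
  | move=> q q'; rewrite !inE => /or4P[]/eqP-> /or4P[]/eqP->; rewrite ?eqxx // => _;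
    rewrite /meet /box_meet /=; lia
  | case=> [[[] c d]]; rewrite /fits /meet /box_meet /= -!orbA => ?; zify; cover ].

Section Families.

Variables a b : nat.
Hypothesis a_gt0 : (0 < a)%N.
Hypothesis b_gt0 : (0 < b)%N.

Local Notation A := (Posz a).
Local Notation B := (Posz b).

Lemma maximal_long_stem : (2 * a <= b + 1)%N ->
  maximal_placements a b
    [:: (Rot0, B, A - 1); (Rot3, A - 1, A - 1); (Rot1, 2 * A, B); (Rot2, A - 1, 2 * A)].
Proof. by move=> *; maximal_by_cover. Qed.

Lemma maximal_short_stem : (b <= a)%N ->
  maximal_placements a b
    [:: (Rot1, 2 * A, B - 1); (Rot0, B - 1, B - 1); (Rot3, B - 1, B); (Rot2, B, 2 * A)].
Proof. by move=> *; maximal_by_cover. Qed.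

Lemma maximal_medium_stem : (a + 2 <= b)%N -> (b + 3 <= 2 * a)%N ->
  maximal_placements a b
    [:: (Rot0, B - 2, 2 * A - 3); (Rot1, 2 * A - 1, B - A - 2);
        (Rot3, A - 3, B - A - 1); (Rot2, B - A, 2 * A - 2)].
Proof. by move=> *; maximal_by_cover. Qed.

Lemma maximal_stem_eq_succ : (3 <= a)%N -> b = a.+1 ->
  maximal_placements a b
    [:: (Rot0, A - 2, A - 2); (Rot0, 0, 2 * A); (Rot1, 2 * A - 2, A + 1); (Rot1, 2 * A - 1, 0)].
Proof. by move=> *; maximal_by_cover. Qed.

Lemma maximal_stem_eq_double_sub2 : (4 <= a)%N -> (b + 2 = 2 * a)%N ->
  maximal_placements a b
    [:: (Rot0, 2 * A - 5, A - 3); (Rot1, 2 * A - 3, 2 * A - 4);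
        (Rot3, A - 4, A - 3); (Rot2, A - 4, 2 * A - 2)].
Proof. by move=> *; maximal_by_cover. Qed.

End Families.

Lemma exists_free_packing_le4 a b : (0 < a)%N -> (0 < b)%N ->
  exists S, free_packing_T a b S /\ (#|` S| <= 4)%N.
Proof.
move=> a_gt0 b_gt0.
suff [s [maxs size4]] : exists s, maximal_placements a b s /\ size s = 4%N.
  exists [fset Q in map (cells a b) s]; split; first exact: free_packing_of_maximal.
  by rewrite card_fseq -size4 -(size_map (cells a b)) size_undup.
have [long|short] := leqP (2 * a) (b + 1).
  by eexists; split; [exact: maximal_long_stem|].
have [|not_short] := leqP b a; first by eexists; split; [exact: maximal_short_stem|].
have [|not_succ] := eqVneq b a.+1.
  by eexists; split; [apply: maximal_stem_eq_succ; lia|].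
have [|not_double_sub2] := eqVneq (b + 2)%N (2 * a).
  by eexists; split; [apply: maximal_stem_eq_double_sub2; lia|].
by eexists; split; [apply: maximal_medium_stem; lia|].
Qed.

Theorem theorem9 (a b : nat) (ha : (0 < a)%N) (hb : (0 < b)%N) :
  exists k : nat, is_cp_free_T a b k /\ (2 <= k <= 4)%N.
Proof.
have [S0 [pack0 small0]] := exists_free_packing_le4 ha hb.
pose packing_size k := exists S, free_packing_T a b S /\ #|` S| = k.
have [k [[[S [packS <-]] least] _]] := dec_inh_nat_subset_has_unique_least_element
  packing_size (fun k => classic (packing_size k)) (ex_intro _ _ (ex_intro _ S0 (conj pack0 erefl))).
exists #|` S|; split.
  by split => [|S' packS']; [exists S | apply/ssrnat.leP; apply: least; exists S'].
rewrite (free_packing_size_ge2 ha hb packS) /=.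
by apply: leq_trans small0; apply/ssrnat.leP; apply: least; exists S0.
Qed.
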